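(* For $n\ge2$, \begin{align*} \left|\Pi_n\wr C_2(1^11^2,1^22^1)\right|&=2B(n)+\sum_{j=2}^n\sum_{k=0}^{n-j}B(n-j-k)+B(n-1)\\ &\quad+\sum_{j=2}^{n-1}B(j-1)\left(B(n-j)+\sum_{k=1}^{n-j}\left(\left(k+\binom{n-j}{k}\right) B(n-j-k)\right)\right), \end{align*} where $B(m)$ is the $m$th Bell number.
   Context: For $n\ge0$ let $[n]=\{1,\dots,n\}$. A $2$-colored set partition of $[n]$ is a set partition of $[n]$ together with an assignment of a color from $\{1,2\}$ to each element; $\Pi_n\wr C_2$ is the set of these. For a set $S$ of patterns, $\Pi_n\wr C_2(S)$ is the set of such colored partitions avoiding every pattern in $S$ in the pattern sense. For the patterns used here: $\sigma$ contains $1^11^2$ iff there are $i<j$ in the same block with $i$ colored $1$ and $j$ colored $2$; $\sigma$ contains $1^22^1$ iff there are $i<j$ in different blocks with $i$ colored $2$ and $j$ colored $1$. $B(m)$ is the number of set partitions of $[m]$, with $B(0)=1$. *)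

From mathcomp Require Import all_boot.
Set Implicit Arguments. Unset Strict Implicit. Unset Printing Implicit Defensive.

(* [n] = {1,...,n} is modelled by 'I_n = {0,...,n-1} (order preserved).
   Colors {1,2} are modelled by 'I_2: color 1 = ord0, color 2 = ord_max. *)
Definition color1 : 'I_2 := ord0.
Definition color2 : 'I_2 := ord_max.

Definition is_setpart (n : nat) (P : {set {set 'I_n}}) : bool :=
  partition P [set: 'I_n].

Definition Bell (m : nat) : nat := #|[set P : {set {set 'I_m}} | is_setpart P]|.

Definition same_block (n : nat) (P : {set {set 'I_n}}) (i j : 'I_n) : bool :=
  [exists B in P, (i \in B) && (j \in B)].

Definition contains_1112 (n : nat) (P : {set {set 'I_n}}) (c : {ffun 'I_n -> 'I_2}) : bool :=
  [exists i : 'I_n, exists j : 'I_n,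
     [&& i < j, same_block P i j, c i == color1 & c j == color2]].

Definition contains_1221 (n : nat) (P : {set {set 'I_n}}) (c : {ffun 'I_n -> 'I_2}) : bool :=
  [exists i : 'I_n, exists j : 'I_n,
     [&& i < j, ~~ same_block P i j, c i == color2 & c j == color1]].

Definition avoiders (n : nat) :=
  [set Pc : {set {set 'I_n}} * {ffun 'I_n -> 'I_2} |
     [&& is_setpart Pc.1, ~~ contains_1112 Pc.1 Pc.2 & ~~ contains_1221 Pc.1 Pc.2]].

From mathcomp Require Import all_boot zify.
Set Implicit Arguments. Unset Strict Implicit. Unset Printing Implicit Defensive.

(* Count the avoiding partitions colouring by colouring, positions being 0..n-1.
   A partition avoids both patterns under c iff no block contains a 1 followed by
   a 2, and every descent of c (a 2 followed by a 1) lies inside a block.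
   If c has no descent, c = 1^a 2^(n-a) and the admissible partitions are those
   refining {[0,a), [a,n)}: B(a) B(n-a) of them.  Otherwise let p be the first 2,
   r the first 1 after p and q the last 1.  A 2 at r < i < q would lie, through
   the descents (p,r), (p,q), (i,q), in the block of r, so
   c = 1^p 2^(r-p) 1^(q-r+1) 2^(n-1-q); the descents glue [p,q] into one block,
   and the other blocks split between [0,p) and (q,n): B(p) B(n-1-q) partitions.
   Hence the count is sum_a B(a) B(n-a) + sum_(p<r<=q<n) B(p) B(n-1-q); the stated
   formula follows by peeling off the end terms and B(m+1) = sum_k C(m,k) B(m-k). *)

(** * Counting set partitions *)

Definition npartitions (T : finType) (A : {set T}) :=
  #|[set P : {set {set T}} | partition P A]|.

Lemma imset_preimset (T T' : finType) (f : T -> T') (A : {set T}) (S : {set T'}) :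
  S \subset f @: A -> f @: (f @^-1: S) = S.
Proof.
move=> sSfA; apply/setP => y; apply/imsetP/idP => [[x] | Sy].
  by rewrite inE => Sfx ->.
by case/imsetP: (subsetP sSfA y Sy) => x _ yE; exists x; rewrite // inE -yE.
Qed.

Lemma npartitions_imset (T T' : finType) (f : T -> T') (A : {set T}) :
  injective f -> npartitions (f @: A) = npartitions A.
Proof.
move=> injf; rewrite /npartitions.
pose fP (P : {set {set T}}) := [set f @: (B : {set T}) | B in P].
have /card_imset <- : injective fP by apply/imset_inj/imset_inj.
apply: eq_card => Q; rewrite inE; apply/idP/imsetP => [partQ | [P]]; last first.
  by rewrite inE => partP ->; rewrite imset_partition.
have sQfA S : S \in Q -> S \subset f @: A.
  by move=> QS; rewrite -(cover_partition partQ); apply: bigcup_sup.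
have fP_preim : fP [set f @^-1: (S : {set T'}) | S in Q] = Q.
  rewrite /fP -imset_comp; apply/setP => S; apply/imsetP/idP => [[S' QS' ->] | QS].
    by rewrite /= (imset_preimset (sQfA _ _)).
  by exists S; rewrite //= (imset_preimset (sQfA _ _)).
exists [set f @^-1: (S : {set T'}) | S in Q]; last by rewrite fP_preim.
by rewrite inE -(imset_partition _ _ injf) -/(fP _) fP_preim.
Qed.

Lemma npartitionsE (T : finType) (A : {set T}) : npartitions A = Bell #|A|.
Proof.
have AE : A = enum_val @: [set: 'I_#|A|].
  apply/setP => x; apply/idP/imsetP => [Ax | [i _ ->]]; last exact: enum_valP.
  by exists (enum_rank_in Ax x); rewrite ?enum_rankK_in.
by rewrite {1}AE npartitions_imset //; apply: enum_val_inj.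
Qed.

Lemma npartitions0 (T : finType) : npartitions (set0 : {set T}) = 1.
Proof.
rewrite /npartitions -(cards1 (set0 : {set {set T}})); apply: eq_card => P.
by rewrite !inE partition_set0.
Qed.

Lemma Bell0 : Bell 0 = 1.
Proof. by rewrite -(npartitions0 unit) npartitionsE cards0. Qed.

Section SplittingPartitions.
Variable T : finType.
Implicit Types (A B D M S : {set T}) (P Q : {set {set T}}).

Definition blocks_within A B P := [forall S in P, (S \subset A) || (S \subset B)].

Lemma subsetU_or S A B :
  S \subset A :|: B -> (forall x y, x \in S -> y \in S -> x \in A -> y \in B -> False) ->
  (S \subset A) || (S \subset B).
Proof.
move=> sSAB noAB; case: (boolP (S \subset A)) => //= /subsetPn[y Sy Ay].
have By : y \in B by case/setUP: (subsetP sSAB y Sy) Ay => // ->.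
apply/subsetP => x Sx; case/setUP: (subsetP sSAB x Sx) => // Ax.
by case: (noAB x y).
Qed.

Lemma partitionU P Q A B : [disjoint A & B] ->
  partition P A -> partition Q B -> partition (P :|: Q) (A :|: B).
Proof.
move=> dAB pP pQ; have [cP cQ] := (cover_partition pP, cover_partition pQ).
apply/and3P; split.
- by rewrite /cover bigcup_setU -!/(cover _) cP cQ.
- by rewrite trivIsetU ?cP ?cQ ?(partition_trivIset pP) ?(partition_trivIset pQ).
- by rewrite inE (partition0 pP) (partition0 pQ).
Qed.

Lemma partition_restrict P D A : partition P D -> A \subset D ->
  {in P, forall S, (S \subset A) || [disjoint S & A]} ->
  partition [set S in P | S \subset A] A.
Proof.
move=> pP sAD PA; apply/and3P; split.
- apply/eqP/setP => x; apply/bigcupP/idP => [[S] | Ax].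
    by rewrite inE => /andP[_ /subsetP]; apply.
  have Dx : x \in cover P by rewrite (cover_partition pP) (subsetP sAD).
  exists (pblock P x); rewrite ?mem_pblock // inE pblock_mem //=.
  case/orP: (PA _ (pblock_mem Dx)) => // /disjointFl/(_ Ax).
  by rewrite mem_pblock Dx.
- by apply: trivIsetS (partition_trivIset pP); apply/subsetP => S; rewrite inE => /andP[].
- by rewrite inE (partition0 pP).
Qed.

Lemma card_partitions_split A B : [disjoint A & B] ->
  #|[set P | partition P (A :|: B) & blocks_within A B P]| = npartitions A * npartitions B.
Proof.
move=> dAB; rewrite /npartitions -cardsX.
pose restr P := ([set S in P | S \subset A], [set S in P | S \subset B]).
have restrK P : blocks_within A B P -> (restr P).1 :|: (restr P).2 = P.
  move/forall_inP=> PAB; apply/setP => S.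
  by rewrite !inE -andb_orr andb_idr // => /PAB.
have AB0 S : S \subset A -> S \subset B -> S = set0.
  by move=> sSA sSB; apply/eqP; rewrite -subset0 -(disjoint_setI0 dAB) subsetI sSA.
rewrite -(card_in_imset (f := restr)); last first.
  by move=> P P'; rewrite !inE => /andP[_ /restrK {2}<-] /andP[_ /restrK {2}<-] ->.
apply: eq_card => -[P1 P2]; rewrite !inE /=; apply/imsetP/andP => [[P] | [pP1 pP2]].
  rewrite inE => /andP[pP /forall_inP PAB] [-> ->]; split.
    apply: partition_restrict pP (subsetUl _ _) _ => S /PAB /orP[-> // | sSB].
    by rewrite orbC (disjointWl sSB) // disjoint_sym.
  apply: partition_restrict pP (subsetUr _ _) _ => S /PAB /orP[sSA | -> //].
  by rewrite orbC (disjointWl sSA).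
exists (P1 :|: P2).
  rewrite inE partitionU //; apply/forall_inP => S /setUP[] PS.
    by rewrite (partitionS pP1 PS).
  by rewrite (partitionS pP2 PS) orbT.
have P2_notA S : S \in P2 -> S \subset A = false.
  by move=> P2S; apply/negP => /AB0/(_ (partitionS pP2 P2S)) S0; rewrite S0 (partition0 pP2) in P2S.
have P1_notB S : S \in P1 -> S \subset B = false.
  by move=> P1S; apply/negP => /(AB0 _ (partitionS pP1 P1S)) S0; rewrite S0 (partition0 pP1) in P1S.
congr pair; apply/setP => S; rewrite !inE;
  case P1S: (S \in P1); case P2S: (S \in P2) => //=;
  by rewrite ?(partitionS pP1 P1S) ?(partitionS pP2 P2S) ?P2_notA ?P1_notB.
Qed.

Lemma card_partitions_with_block D M (R : pred {set {set T}}) :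
  M != set0 -> M \subset D ->
  #|[set P | [&& partition P D, M \in P & R (P :\ M)]]| =
  #|[set P | partition P (D :\: M) & R P]|.
Proof.
move=> M0 sMD.
rewrite -(card_in_imset (f := fun P => P :\ M)); last first.
  move=> P P'; rewrite !inE => /and3P[_ MP _] /and3P[_ MP' _] PP'.
  by rewrite -(setD1K MP) PP' setD1K.
apply: eq_card => P'; rewrite inE; apply/imsetP/andP => [[P] | [pP' RP']].
  by rewrite inE => /and3P[pP MP RP] ->; rewrite partitionD1.
have MP' : M \notin P'.
  by apply: contra M0 => /(partitionS pP'); rewrite subsetD -setI_eq0 setIid => /andP[].
have DE : M :|: (D :\: M) = D by rewrite setDE setUIr setUCr setIT; apply/setUidPr.
exists (M |: P'); last by rewrite setU1K.
rewrite inE -{1}DE partitionU1 // ?setU11 ?setU1K //.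
by rewrite -setI_eq0 setDE setICA setICr setI0.
Qed.

Lemma card_partitions_block D M : M != set0 -> M \subset D ->
  #|[set P | partition P D & M \in P]| = npartitions (D :\: M).
Proof.
move=> M0 sMD; have := card_partitions_with_block predT M0 sMD.
rewrite /npartitions (eq_card (B := [set P | partition P D & M \in P])) => [-> |P].
  by apply: eq_card => P; rewrite !inE andbT.
by rewrite !inE andbT.
Qed.

Lemma mem_pblockT P x : partition P [set: T] -> x \in pblock P x.
Proof. by move=> pP; rewrite mem_pblock (cover_partition pP) inE. Qed.

Lemma pblock_memT P x : partition P [set: T] -> pblock P x \in P.
Proof. by move=> pP; rewrite pblock_mem // (cover_partition pP) inE. Qed.

Lemma pblock_eq_mem P D M x : partition P D -> M \subset D -> x \in M ->
  (pblock P x == M) = (M \in P).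
Proof.
move=> pP sMD Mx; have Dx : x \in cover P by rewrite (cover_partition pP) (subsetP sMD).
apply/eqP/idP => [<- | MP]; first exact: pblock_mem.
exact: def_pblock (partition_trivIset pP) MP Mx.
Qed.

End SplittingPartitions.

Lemma sum_set_card (T : finType) (F : nat -> nat) :
  \sum_(S : {set T}) F #|S| = \sum_(k < #|T|.+1) 'C(#|T|, k) * F k.
Proof.
rewrite (partition_big (fun S : {set T} => inord #|S| : 'I_#|T|.+1) xpredT) //=.
apply: eq_bigr => k _; rewrite -card_draws -sum_nat_const.
have inordK_card (S : {set T}) : inord #|S| = k :> 'I_#|T|.+1 <-> #|S| = k.
  have leST : #|S| < #|T|.+1 by rewrite ltnS max_card.
  by split => [<- | Sk]; [rewrite inordK | apply: val_inj; rewrite /= inordK].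
apply: eq_big => [S | S /eqP /inordK_card <- //]; rewrite inE.
by apply/eqP/eqP => /inordK_card.
Qed.

Lemma BellS m : Bell m.+1 = \sum_(k < m.+1) 'C(m, k) * Bell (m - k).
Proof.
pose withNone (S : {set 'I_m}) : {set option 'I_m} := None |: Some @: S.
have withNoneK : cancel withNone (fun X => Some @^-1: X).
  by move=> S; apply/setP => i; rewrite !inE (mem_imset _ _ Some_inj).
have withNoneE (X : {set option 'I_m}) : None \in X -> withNone (Some @^-1: X) = X.
  by move=> XN; apply/setP => -[i|]; rewrite !inE ?XN // (mem_imset _ _ Some_inj) inE.
have := sum_set_card 'I_m (fun k => Bell (m - k)); rewrite card_ord => <-.
have -> : m.+1 = #|[set: option 'I_m]| by rewrite cardsT card_option card_ord.
rewrite -npartitionsE /npartitions -sum1_card.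
rewrite (partition_big (fun P => Some @^-1: pblock P None) xpredT) //=.
apply: eq_bigr => S _; rewrite sum1_card.
(* [withNone S] is the block of [None]; the other blocks partition its complement. *)
have pblock_NoneE P : partition P [set: option 'I_m] ->
    (Some @^-1: pblock P None == S) = (withNone S \in P).
  move=> pP; rewrite -(pblock_eq_mem pP (subsetT _) (setU11 _ _)).
  rewrite -(inj_eq (can_inj withNoneK)) withNoneE //.
  by rewrite mem_pblock (cover_partition pP) inE.
rewrite -(eq_card (A := [set P | partition P setT & withNone S \in P])); last first.
  by move=> P; rewrite [RHS]unfold_in /= !inE; case pP: (partition P _); rewrite //= pblock_NoneE.
rewrite card_partitions_block ?subsetT ?setTD //; last by apply/set0Pn; exists None; apply: setU11.
rewrite npartitionsE; congr Bell.
have := cardsC (withNone S); rewrite card_option card_ord cardsU1 (card_imset _ Some_inj).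
have -> : (None \in Some @: S) = false by apply/imsetP => -[].
by rewrite /= add1n addSn => -[/(canRL (addKn _))].
Qed.

(** * Avoiding partitions, colouring by colouring *)

Lemma color1E (x : 'I_2) : (x == color1) = (x != color2).
Proof. by case: x => -[|[|]]. Qed.

Lemma card_ord_lt n a : a <= n -> #|[set i : 'I_n | i < a]| = a.
Proof.
move=> an; have widen_inj : injective (widen_ord an) by move=> i j /(congr1 val) /= /val_inj.
rewrite -[RHS](card_ord a) -cardsT -(card_imset _ widen_inj).
apply: eq_card => i; rewrite inE; apply/idP/imsetP => [ia | [j _ ->] /=]; last exact: ltn_ord.
by exists (Ordinal ia); rewrite ?inE //; apply: val_inj.
Qed.

Lemma card_ord_ge n a : a <= n -> #|[set i : 'I_n | a <= i]| = n - a.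
Proof.
move=> an; have := cardsC [set i : 'I_n | i < a]; rewrite card_ord card_ord_lt // => nE.
by rewrite -[in RHS]nE addKn; apply: eq_card => i; rewrite !inE -leqNgt.
Qed.

Lemma card_sum_fibers (T U : finType) (A : {set T * U}) :
  #|A| = \sum_(u : U) #|[set t | (t, u) \in A]|.
Proof.
rewrite -sum1_card big_mkcond /=.
have -> : \sum_(x : T * U) (if x \in A then 1 else 0) =
    \sum_(t : T) \sum_(u : U) (if (t, u) \in A then 1 else 0).
  by rewrite pair_big; apply: eq_bigr => -[].
rewrite exchange_big; apply: eq_bigr => u _.
by rewrite -sum1_card [RHS]big_mkcond; apply: eq_bigr => t _; rewrite inE.
Qed.

Section Colorings.
Variable n : nat.
Implicit Types (P : {set {set 'I_n}}) (c : {ffun 'I_n -> 'I_2}).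

Lemma same_blockE P i j : partition P [set: 'I_n] -> same_block P i j = (j \in pblock P i).
Proof.
move=> pP; have Pi : i \in cover P by rewrite (cover_partition pP) inE.
apply/existsP/idP => [[S /and3P[PS Si Sj]] | ij].
  by rewrite (def_pblock (partition_trivIset pP) PS Si).
by exists (pblock P i); rewrite pblock_mem // mem_pblock Pi.
Qed.

Lemma avoidersP P c : reflect
  [/\ partition P [set: 'I_n],
      forall i j : 'I_n, i < j -> c i == color1 -> c j == color2 -> j \notin pblock P i &
      forall i j : 'I_n, i < j -> c i == color2 -> c j == color1 -> j \in pblock P i]
  ((P, c) \in avoiders n).
Proof.
rewrite inE /= /is_setpart; apply: (iffP and3P) => -[pP no12 no21]; split => //.
- move=> i j ij ci cj; apply: contra no12 => Pij.
  by apply/existsP; exists i; apply/existsP; exists j; rewrite ij same_blockE ?Pij ?ci.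
- move=> i j ij ci cj; apply: contraR no21 => Pij.
  by apply/existsP; exists i; apply/existsP; exists j; rewrite ij same_blockE ?Pij ?ci.
- apply/existsPn => i; apply/existsPn => j; apply/and4P => -[ij].
  by rewrite same_blockE // => Pij /(no12 i j ij) /[apply]; rewrite Pij.
- apply/existsPn => i; apply/existsPn => j; apply/and4P => -[ij].
  by rewrite same_blockE // => /negP Pij /(no21 i j ij) /[apply].
Qed.

Definition coloring (b : pred 'I_n) : {ffun 'I_n -> 'I_2} :=
  [ffun i => if b i then color2 else color1].

Lemma coloring2 b i : (coloring b i == color2) = b i.
Proof. by rewrite ffunE; case: (b i). Qed.

Lemma coloring1 b i : (coloring b i == color1) = ~~ b i.
Proof. by rewrite color1E coloring2. Qed.

Lemma coloring_eq c (b : pred 'I_n) : (forall i, (c i == color2) = b i) -> c = coloring b.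
Proof.
move=> cb; apply/ffunP => i; rewrite ffunE -cb.
by case: eqP => // /eqP; rewrite -color1E => /eqP.
Qed.

Lemma coloring_inj b b' : coloring b = coloring b' -> b =1 b'.
Proof. by move=> bb' i; rewrite -!coloring2 bb'. Qed.

Definition sorted_coloring (a : nat) := coloring (fun i => a <= i).

Definition descent_coloring (p r q : nat) := coloring (fun i => (p <= i < r) || (q < i)).

Lemma avoiders_sorted_coloring a P :
  ((P, sorted_coloring a) \in avoiders n) =
  partition P [set: 'I_n] && blocks_within [set i : 'I_n | i < a] [set i : 'I_n | a <= i] P.
Proof.
apply/avoidersP/andP => [[pP no12 _] | [pP /forall_inP within]]; split => //.
- apply/forall_inP => S PS; apply: subsetU_or => [|x y Sx Sy].
    by apply/subsetP => x _; rewrite !inE; lia.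
  rewrite !inE => xa ay; have xy : x < y by lia.
  have := no12 x y xy; rewrite coloring1 coloring2 -ltnNge xa ay.
  by rewrite (def_pblock (partition_trivIset pP) PS Sx) Sy => /(_ isT isT).
- move=> i j ij; rewrite coloring1 coloring2 -ltnNge => ia aj; apply/negP => Pij.
  case/orP: (within _ (pblock_memT i pP)) => /subsetP sub.
    by have := sub j Pij; rewrite inE; lia.
  by have := sub i (mem_pblockT i pP); rewrite inE; lia.
- by move=> i j ij; rewrite coloring2 coloring1 -ltnNge => ai ja; exfalso; lia.
Qed.

Lemma card_avoiders_sorted_coloring a : a <= n ->
  #|[set P | (P, sorted_coloring a) \in avoiders n]| = Bell a * Bell (n - a).
Proof.
move=> an; set Lo := [set i : 'I_n | i < a]; set Hi := [set i : 'I_n | a <= i].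
have setT_LoHi : [set: 'I_n] = Lo :|: Hi by apply/setP => i; rewrite !inE; lia.
rewrite (eq_card (B := [set P | partition P (Lo :|: Hi) & blocks_within Lo Hi P])); last first.
  by move=> P; rewrite [LHS]inE avoiders_sorted_coloring inE setT_LoHi.
rewrite card_partitions_split ?npartitionsE ?card_ord_lt ?card_ord_ge //.
by apply/pred0P => i; rewrite /= !inE; lia.
Qed.

Section DescentColoring.
Variables (p r q : nat).
Hypotheses (pr : p < r) (rq : r <= q) (qn : q < n).
Let M := [set i : 'I_n | p <= i <= q].

Lemma pblock_descent_coloring P (pn : p < n) :
  (P, descent_coloring p r q) \in avoiders n -> pblock P (Ordinal pn) = M.
Proof.
case/avoidersP => pP no12 no21; have tP := partition_trivIset pP.
have Pcov x : x \in cover P by rewrite (cover_partition pP) inE.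
have rn : r < n by lia.
have Pp_r : pblock P (Ordinal pn) = pblock P (Ordinal rn).
  by apply/eqP; rewrite eq_pblock // no21 ?coloring2 ?coloring1 //=; lia.
apply/setP => x; rewrite inE; apply/idP/idP => [Px | /andP[px xq]].
  have Px_p : pblock P x = pblock P (Ordinal pn) := same_pblock tP Px.
  apply/andP; split; rewrite leqNgt; apply/negP => lt.
    apply: (negP (no12 x (Ordinal pn) lt _ _)); rewrite ?coloring1 ?coloring2 /=; try lia.
    by rewrite Px_p mem_pblockT.
  apply: (negP (no12 (Ordinal rn) x _ _ _)); rewrite ?coloring1 ?coloring2 /=; try lia.
  by rewrite -Pp_r.
case: (ltnP x r) => [xr | rx].
  case: (eqVneq x (Ordinal pn)) => [-> | xop]; first exact: mem_pblockT.
  rewrite -eq_pblock // Pp_r eq_sym eq_pblock //.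
  by rewrite no21 ?coloring2 ?coloring1 //=; lia.
by rewrite no21 ?coloring2 ?coloring1 //=; lia.
Qed.

Lemma avoiders_descent_coloring P :
  ((P, descent_coloring p r q) \in avoiders n) =
  [&& partition P [set: 'I_n], M \in P &
      blocks_within [set i : 'I_n | i < p] [set i : 'I_n | q < i] (P :\ M)].
Proof.
have pn : p < n by lia.
apply/idP/and3P => [avP | [pP PM /forall_inP within]].
  have MP := pblock_descent_coloring pn avP.
  case/avoidersP: avP => pP no12 _; have tP := partition_trivIset pP.
  have PM : M \in P by rewrite -MP pblock_memT.
  split => //; apply/forall_inP => S; rewrite !inE => /andP[SM PS].
  apply: subsetU_or => [|x y Sx Sy]; last first.
    rewrite !inE => xp qy; apply: (negP (no12 x y _ _ _));
      by rewrite ?coloring1 ?coloring2 ?(def_pblock tP PS Sx) //; lia.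
  apply/subsetP => x Sx; rewrite !inE; case: (boolP (p <= x <= q)) => [Mx | ]; last lia.
  by move: SM; rewrite -(def_pblock tP PS Sx) (def_pblock tP PM) ?inE ?eqxx.
have tP := partition_trivIset pP.
apply/avoidersP; split => // i j ij; rewrite ?coloring1 ?coloring2 => ci cj.
  apply/negP => Pij; case: (eqVneq (pblock P i) M) => [PiM | PiM].
    by move: (mem_pblockT i pP) Pij; rewrite PiM !inE; lia.
  have := within (pblock P i); rewrite !inE PiM pblock_memT // => /(_ isT) /orP[] /subsetP sub.
    by have := sub j Pij; rewrite inE; lia.
  by have := sub i (mem_pblockT i pP); rewrite inE; lia.
by rewrite (def_pblock tP PM) inE; lia.
Qed.

Lemma card_avoiders_descent_coloring :
  #|[set P | (P, descent_coloring p r q) \in avoiders n]| = Bell p * Bell (n - q.+1).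
Proof.
rewrite (eq_card (B := [set P | [&& partition P [set: 'I_n], M \in P &
    blocks_within [set i : 'I_n | i < p] [set i : 'I_n | q < i] (P :\ M)]])); last first.
  by move=> P; rewrite [LHS]inE avoiders_descent_coloring inE.
rewrite card_partitions_with_block ?subsetT //; last first.
  apply/set0Pn; exists (Ordinal (leq_ltn_trans (ltnW (leq_trans pr rq)) qn)).
  by rewrite inE /=; lia.
have -> : [set: 'I_n] :\: M = [set i : 'I_n | i < p] :|: [set i : 'I_n | q < i].
  by apply/setP => i; rewrite !inE; lia.
rewrite card_partitions_split ?npartitionsE ?card_ord_lt ?card_ord_ge //; try lia.
by apply/pred0P => i; rewrite /= !inE; lia.
Qed.

End DescentColoring.

Definition has_descent c :=
  [exists i : 'I_n, exists j : 'I_n, [&& i < j, c i == color2 & c j == color1]].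

Definition descent_shapes := [set t : 'I_n * 'I_n * 'I_n | t.1.1 < t.1.2 <= t.2].

Lemma sorted_coloringP c : ~~ has_descent c -> exists a : 'I_n.+1, c = sorted_coloring a.
Proof.
move=> nodesc; have up (i j : 'I_n) : i <= j -> c i == color2 -> c j == color2.
  rewrite leq_eqVlt => /orP[/eqP/val_inj -> // | ij] ci; rewrite -[_ == _]negbK -color1E.
  by apply: contra nodesc => cj; apply/existsP; exists i; apply/existsP; exists j; rewrite ij ci.
case: (pickP (fun i => c i == color2)) => [i0 ci0 | no2].
  have [a ca mina] := @arg_minnP _ i0 (fun i => c i == color2) val ci0.
  exists (widen_ord (leqnSn n) a); apply: coloring_eq => i /=.
  by apply/idP/idP => [/mina | /up]; last apply.
by exists ord_max; apply: coloring_eq => i /=; rewrite no2 leqNgt ltn_ord.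
Qed.

Lemma descent_coloringP P c : (P, c) \in avoiders n -> has_descent c ->
  c \in [set descent_coloring t.1.1 t.1.2 t.2 | t : 'I_n * 'I_n * 'I_n in descent_shapes].
Proof.
case/avoidersP => pP no12 no21 /existsP[i0 /existsP[j0 /and3P[ij0 ci0 cj0]]].
have tP := partition_trivIset pP.
have Pcov x : x \in cover P by rewrite (cover_partition pP) inE.
have [p cp minp] := @arg_minnP _ i0 (fun i => c i == color2) val ci0.
have pj0 : (p < j0) && (c j0 == color1) by rewrite cj0 andbT (leq_ltn_trans (minp i0 ci0)).
have [r /andP[pr cr] minr] := @arg_minnP _ j0 (fun j => (p < j) && (c j == color1)) val pj0.
have [q cq maxq] := @arg_maxnP _ j0 (fun j => c j == color1) val cj0.
have rq : r <= q := maxq r cr.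
have colors_neq x y : c x == color1 -> c y == color2 -> val x != val y.
  by move=> cx cy; apply/eqP => /val_inj xy; move: cx; rewrite xy color1E cy.
have no2_between (i : 'I_n) : r <= i <= q -> c i != color2.
  case/andP => ri iq; apply/negP => ci.
  have ri' : r < i by rewrite ltn_neqAle colors_neq.
  have iq' : i < q by rewrite ltn_neqAle eq_sym colors_neq.
  have Ppr : pblock P p = pblock P r by apply/eqP; rewrite eq_pblock // no21.
  have Ppq : pblock P p = pblock P q by apply/eqP; rewrite eq_pblock // no21 //; lia.
  have Piq : pblock P i = pblock P q by apply/eqP; rewrite eq_pblock // no21.
  by apply: (negP (no12 r i ri' cr ci)); rewrite -eq_pblock // -Ppr Ppq -Piq.
apply/imsetP; exists (p, r, q); first by rewrite inE /= pr rq.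
apply: coloring_eq => i /=; apply/idP/idP => [ci | /orP[/andP[pi ir] | qi]].
- have pi := minp i ci; case: (ltnP q i) => [_ | iq]; rewrite ?orbT //.
  case: (ltnP i r) => [_ | ri]; rewrite ?pi //.
  by move: (no2_between i); rewrite ri iq ci => /(_ isT).
- case: (eqVneq i p) => [-> // | ip]; rewrite -[_ == _]negbK -color1E; apply/negP => ci.
  have /minr : (p < i) && (c i == color1) by rewrite ci andbT ltn_neqAle pi andbT val_eqE eq_sym.
  by rewrite leqNgt ir.
- by rewrite -[_ == _]negbK -color1E; apply/negP => /maxq /=; rewrite leqNgt qi.
Qed.

Lemma sorted_coloring_inj : injective (fun a : 'I_n.+1 => sorted_coloring a).
Proof.
move=> a a' /coloring_inj E; apply: val_inj.
have [an a'n] : a <= n /\ a' <= n by split; rewrite -ltnS.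
case: (ltngtP a a') => // lt.
  by have := E (Ordinal (leq_trans lt a'n)) => /=; lia.
by have := E (Ordinal (leq_trans lt an)) => /=; lia.
Qed.

Lemma descent_coloring_inj :
  {in descent_shapes &, injective (fun t : 'I_n * 'I_n * 'I_n => descent_coloring t.1.1 t.1.2 t.2)}.
Proof.
move=> [[p r] q] [[p' r'] q']; rewrite !inE /= => /andP[pr rq] /andP[pr' rq'] /coloring_inj E.
have E' k : k < n -> ((p <= k < r) || (q < k)) = ((p' <= k < r') || (q' < k)).
  by move=> kn; apply: (E (Ordinal kn)).
have pp : p = p' :> nat.
  by case: (ltngtP p p') => // lt; [have := E' _ (ltn_ord p) | have := E' _ (ltn_ord p')]; lia.
have rr : r = r' :> nat.
  by case: (ltngtP r r') => // lt; [have := E' _ (ltn_ord r) | have := E' _ (ltn_ord r')]; lia.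
have qq : q = q' :> nat.
  by case: (ltngtP q q') => // lt; [have := E' _ (ltn_ord q') | have := E' _ (ltn_ord q)]; lia.
by rewrite (val_inj pp) (val_inj rr) (val_inj qq).
Qed.

Lemma descent_free_colorings :
  [set c | ~~ has_descent c] = [set sorted_coloring a | a : 'I_n.+1].
Proof.
apply/setP => c; rewrite inE; apply/idP/imsetP => [/sorted_coloringP[a ->] | [a _ ->]].
  by exists a.
apply/existsPn => i; apply/existsPn => j; rewrite coloring2 coloring1.
by apply/and3P => -[]; lia.
Qed.

Lemma descent_coloring_has_descent (t : 'I_n * 'I_n * 'I_n) : t \in descent_shapes ->
  has_descent (descent_coloring t.1.1 t.1.2 t.2).
Proof.
case: t => [[p r] q]; rewrite inE /= => /andP[pr rq].
by apply/existsP; exists p; apply/existsP; exists r; rewrite pr coloring2 coloring1 /=; lia.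
Qed.

Lemma card_avoidersE : #|avoiders n| =
  \sum_(a < n.+1) Bell a * Bell (n - a) +
  \sum_(t in descent_shapes) Bell t.1.1 * Bell (n - t.2.+1).
Proof.
pose dcol (t : 'I_n * 'I_n * 'I_n) := descent_coloring t.1.1 t.1.2 t.2.
rewrite card_sum_fibers (bigID has_descent) [LHS]addnC /=; congr (_ + _).
  rewrite (eq_bigl (fun c => c \in [set sorted_coloring a | a : 'I_n.+1])); last first.
    by move=> c; rewrite -descent_free_colorings inE.
  rewrite big_imset /=; last by move=> a a' _ _; apply: sorted_coloring_inj.
  by apply: eq_bigr => a _; rewrite card_avoiders_sorted_coloring // -ltnS.
rewrite (bigID (mem (dcol @: descent_shapes))) /= [X in _ + X]big1 ?addn0; last first.
  move=> c /andP[desc /negP notD]; apply/eqP; rewrite cards_eq0; apply/eqP/setP => P.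
  by rewrite in_set0 [LHS]inE; apply/negP => avP; apply: notD; apply: descent_coloringP avP desc.
rewrite (eq_bigl (fun c => c \in dcol @: descent_shapes)); last first.
  by move=> c; rewrite andb_idl // => /imsetP[t /descent_coloring_has_descent + ->].
rewrite big_imset /=; last exact: descent_coloring_inj.
apply: eq_bigr => -[[p r] q]; rewrite inE /= => /andP[pr rq].
by rewrite card_avoiders_descent_coloring.
Qed.

End Colorings.

(** * Sums of Bell numbers *)

Lemma sum_triangle (F : nat -> nat) a n :
  \sum_(a <= j < n) \sum_(j <= m < n) F m = \sum_(a <= m < n) (m - a).+1 * F m.
Proof.
elim: n => [|n IH]; first by rewrite !big_geq.
case: (leqP a n) => [an | na]; last by rewrite !big_geq.
rewrite [LHS]big_nat_recr //= big_nat1 [RHS]big_nat_recr //= -IH.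
rewrite (eq_big_nat _ _ (F2 := fun j => \sum_(j <= m < n) F m + F n)); last first.
  by move=> j /andP[_ jn]; rewrite big_nat_recr // ltnW.
rewrite big_split /= sum_nat_const_nat; lia.
Qed.

Definition Bell_weighted m := \sum_(1 <= k < m.+1) k * Bell (m - k).

Lemma sum_descent_shapes n :
  \sum_(t in descent_shapes n) Bell t.1.1 * Bell (n - t.2.+1) =
  \sum_(p < n) Bell p * Bell_weighted (n.-1 - p).
Proof.
have -> : \sum_(t in descent_shapes n) Bell t.1.1 * Bell (n - t.2.+1) =
    \sum_(p < n) \sum_(r < n) \sum_(q < n)
      (if p < r <= q then Bell p * Bell (n - q.+1) else 0).
  rewrite pair_big pair_big big_mkcond.
  by apply: eq_bigr => -[[p r] q] _; rewrite inE.
apply: eq_bigr => p _; rewrite /Bell_weighted big_distrr /=.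
transitivity (\sum_(p.+1 <= r < n) \sum_(r <= q < n) Bell p * Bell (n - q.+1)).
  rewrite [RHS]big_geq_mkord [RHS]big_mkcond; apply: eq_bigr => r _ /=.
  case: ltnP => pr /=; last by rewrite big1 // => q _; rewrite if_same.
  by rewrite [RHS]big_geq_mkord [RHS]big_mkcond; apply: eq_bigr => q _; case: leqP.
rewrite (sum_triangle (fun q => Bell p * Bell (n - q.+1))) -(add1n p) big_addn.
have -> : (n.-1 - p).+1 = n - p by have := ltn_ord p; lia.
apply: eq_big_nat => k /andP[k1 kn]; rewrite mulnCA; congr (_ * (_ * Bell _)); lia.
Qed.

Lemma double_sum_Bell n : 0 < n ->
  \sum_(2 <= j < n.+1) \sum_(0 <= k < (n - j).+1) Bell (n - j - k) = Bell_weighted n.-1.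
Proof.
move=> n0; transitivity (\sum_(2 <= j < n.+1) \sum_(j <= m < n.+1) Bell (n - m)).
  apply: eq_big_nat => j /andP[_ jn]; rewrite -[in RHS](add0n j) big_addn.
  have -> : n.+1 - j = (n - j).+1 by lia.
  by apply: eq_big_nat => k _; congr Bell; lia.
rewrite sum_triangle /Bell_weighted -(add1n 1) big_addn.
have -> : n.-1.+1 = n.+1 - 1 by lia.
by apply: eq_big_nat => k /andP[k1 _]; congr (_ * Bell _); lia.
Qed.

Lemma sum_ord_peel (G : nat -> nat) n : 1 < n ->
  \sum_(i < n) G i = G 0 + \sum_(2 <= j < n) G (j - 1) + G (n - 1).
Proof.
move=> n1; rewrite -(big_mkord xpredT) big_ltn 1?ltnW // -addnA; congr (_ + _).
have -> : n = (n - 1).+1 by lia.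
rewrite big_nat_recr /=; last lia.
rewrite subn1 /= -[2]/(1 + 1) big_addn subn1 /=; congr (_ + _).
by apply: eq_big_nat => i _; rewrite addn1 subn1.
Qed.

Lemma Bell1 : Bell 1 = 1.
Proof. by rewrite BellS big_ord1 bin0 Bell0. Qed.

Lemma sum_Bell_convolution n : 1 < n ->
  \sum_(a < n.+1) Bell a * Bell (n - a) =
  2 * Bell n + Bell (n - 1) + \sum_(2 <= j < n) Bell (j - 1) * Bell (n - j).+1.
Proof.
move=> n1; rewrite (@sum_ord_peel (fun a => Bell a * Bell (n - a)) n.+1 (ltnW n1)) big_nat_recr //=.
have -> : n - (n - 1) = 1 by lia.
rewrite subSS !subn0 subnn Bell0 Bell1.
rewrite (eq_big_nat _ _ (F2 := fun j => Bell (j - 1) * Bell (n - j).+1)); first lia.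
by move=> j /andP[j2 jn]; congr (_ * Bell _); lia.
Qed.

Lemma sum_Bell_weighted n : 1 < n ->
  \sum_(p < n) Bell p * Bell_weighted (n.-1 - p) =
  Bell_weighted n.-1 + \sum_(2 <= j < n) Bell (j - 1) * Bell_weighted (n - j).
Proof.
move=> n1; rewrite (sum_ord_peel (fun p => Bell p * Bell_weighted (n.-1 - p))) //.
have -> : n.-1 - (n - 1) = 0 by lia.
have -> : Bell_weighted 0 = 0 by rewrite /Bell_weighted big_geq.
rewrite Bell0 mul1n subn0 muln0 addn0; congr (_ + _).
by apply: eq_big_nat => j /andP[j2 jn]; congr (_ * Bell_weighted _); lia.
Qed.

Theorem mainTheorem7 (n : nat) (hn : 2 <= n) :
  #|avoiders n| =
    2 * Bell n
    + \sum_(2 <= j < n.+1) \sum_(0 <= k < (n - j).+1) Bell (n - j - k)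
    + Bell (n - 1)
    + \sum_(2 <= j < n)
        Bell (j - 1) * (Bell (n - j)
          + \sum_(1 <= k < (n - j).+1) ((k + 'C(n - j, k)) * Bell (n - j - k))).
Proof.
have BellS_weighted m : Bell m + \sum_(1 <= k < m.+1) ((k + 'C(m, k)) * Bell (m - k)) =
    Bell m.+1 + Bell_weighted m.
  under eq_bigr do rewrite mulnDl.
  rewrite big_split /= BellS -(big_mkord xpredT (fun k => 'C(m, k) * Bell (m - k))).
  by rewrite (big_ltn (m := 0)) // bin0 mul1n subn0 /Bell_weighted /=; lia.
rewrite card_avoidersE sum_descent_shapes sum_Bell_convolution // sum_Bell_weighted //.
rewrite (double_sum_Bell (ltnW hn)).
under [in RHS]eq_bigr do rewrite BellS_weighted mulnDr.
by rewrite big_split /=; lia.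
Qed.
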